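(* Let $G$ be a strongly observable directed graph on $K$ vertices with independence number $\alpha$. The set $D$ returned by the procedure OODS (described in the context) on input $G$ satisfies $|D|\le\lceil\alpha(1+2\ln(K/\alpha))\rceil$. Moreover, if $G$ is acyclic or undirected, then $|D|\le\alpha$.
   Context: A directed graph $G=([K],E)$ (self-loops allowed) is strongly observable if every vertex either has a self-loop or has incoming edges from all other vertices. The independence number $\alpha$ is the maximum size of a set of vertices no two distinct members of which are joined by an edge (in either direction). An undirected graph is treated as the directed graph with both orientations of each edge. A ''no-root vertex'' is a vertex with no incoming edges other than its self-loop. The out-neighbors of a vertex $u$ are the vertices $w$ with $(u,w)\in E$; the out-degree is their number. Procedure OODS: start with $D=\emptyset$. While $G$ is nonempty: if $G$ (currently) is acyclic, add all no-root vertices to $D$ and remove them and their out-neighbors from $G$; otherwise, select a vertex of largest out-degree in $G$, add it to $D$, and remove it and its out-neighbors from $G$. Return $D$. *)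

From HB Require Import structures.
From mathcomp Require Import all_boot all_order all_algebra.
From mathcomp Require Import reals exp.
Set Implicit Arguments. Unset Strict Implicit. Unset Printing Implicit Defensive.

Section OODS.
Variables (T : finType) (E : rel T).
(* A directed graph G = (T, E); self-loops allowed (E v v). K = #|T|. *)

Definition strongly_observable : Prop :=
  forall v : T, E v v \/ (forall u : T, u != v -> E u v).

Definition independent (A : {set T}) : bool :=
  [forall x in A, forall y in A, (x != y) ==> ~~ E x y].

Definition alpha : nat := \max_(A : {set T} | independent A) #|A|.

Definition undirected : Prop := forall x y, E x y = E y x.

Definition sub_edge (S : {set T}) : rel T :=
  fun x y => [&& x \in S, y \in S, x != y & E x y].

Definition acyclic (S : {set T}) : bool :=
  [forall x, forall y, sub_edge S x y ==> ~~ connect (sub_edge S) y x].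

Definition outN (S : {set T}) (u : T) : {set T} := [set w in S | E u w].
Definition outdeg (S : {set T}) (u : T) : nat := #|outN S u|.

Definition noroot (S : {set T}) (v : T) : bool :=
  (v \in S) && [forall u in S, (u != v) ==> ~~ E u v].

Definition noroots (S : {set T}) : {set T} := [set v | noroot S v].

(* oods_run S D : starting from current vertex set S, procedure OODS can
   (for some tie-breaking) add exactly the vertices of D before terminating. *)
Inductive oods_run : {set T} -> {set T} -> Prop :=
| oods_stop : oods_run set0 set0
| oods_acyc S D :
    S != set0 -> acyclic S ->
    oods_run (S :\: (noroots S :|: \bigcup_(u in noroots S) outN S u)) D ->
    oods_run S (noroots S :|: D)
| oods_greedy S u D :
    S != set0 -> ~~ acyclic S -> u \in S ->
    (forall v, v \in S -> outdeg S v <= outdeg S u) ->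
    oods_run (S :\: (u |: outN S u)) D ->
    oods_run S (u |: D).

Definition OODS_output (D : {set T}) : Prop := oods_run [set: T] D.

End OODS.

(* The output of OODS consists of the vertices picked in greedy steps and the
   output of the first acyclic step, if any.  On an acyclic or undirected graph
   OODS only outputs independent sets, since every picked vertex removes its
   out-neighbours (and, in an undirected graph, its in-neighbours).  This gives
   the bound alpha in those cases, and bounds the acyclic phase by alpha in
   general.

   Consider a greedy step on n vertices, with maximum out-degree d, and let L
   be the set of loopless vertices.  By strong observability every looped vertex
   points to all of L, so inside the set V of looped vertices the out-degrees
   (self-loops aside) are at most m = d - 1 - |L|.  The underlying undirected
   graph on V is then 2m-degenerate, hence has an independent set of size at
   least |V|/(2m+1).  It follows that the step removes r vertices with
   n + alpha <= 2 alpha r, and r >= 2 because the graph has an edge.  With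
   N = n + alpha, the potential
     phi(n) = n/2                                  if n <= 2 alpha,
     phi(n) = 2 alpha ln(N/(3 alpha)) + alpha + 1  otherwise
   drops by at least 1 at each greedy step, as -ln(1 - r/N) >= r/N.  Each
   greedy step also removes a vertex outside any given independent set, so the
   number g of greedy steps satisfies g <= phi(K) and g + alpha <= K, which
   together give g - 1 < 2 alpha ln(K/alpha); finally |D| <= g + alpha. *)

From HB Require Import structures.
From mathcomp Require Import all_boot all_order all_algebra.
From mathcomp Require Import reals exp.
From mathcomp Require Import ring lra zify.
Set Implicit Arguments. Unset Strict Implicit. Unset Printing Implicit Defensive.

Section Independence.
Variables (T : finType) (E : rel T).

Lemma independentP (I : {set T}) :
  reflect {in I &, forall x y, x != y -> ~~ E x y} (independent E I).
Proof.
apply: (iffP forall_inP) => [indI x y xI yI | indI x xI].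
  by move/forall_inP: (indI x xI) => /(_ y yI) /implyP.
by apply/forall_inP => y yI; apply/implyP; apply: indI.
Qed.

Lemma independentS (I J : {set T}) :
  I \subset J -> independent E J -> independent E I.
Proof.
move=> /subsetP sIJ /independentP indJ; apply/independentP => x y xI yI.
exact: indJ (sIJ x xI) (sIJ y yI).
Qed.

Lemma independent0 : independent E set0.
Proof. by apply/independentP => x; rewrite inE. Qed.

Lemma independent1 x : independent E [set x].
Proof. by apply/independentP => y z /set1P -> /set1P ->; rewrite eqxx. Qed.

Lemma independentU (I J : {set T}) :
  independent E I -> independent E J ->
  {in I & J, forall x y, ~~ E x y && ~~ E y x} -> independent E (I :|: J).
Proof.
move=> /independentP indI /independentP indJ cross.
apply/independentP => x y; rewrite !inE => /orP[xI|xJ] /orP[yI|yJ] xy.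
- exact: indI.
- by case/andP: (cross x y xI yJ).
- by case/andP: (cross y x yI xJ).
- exact: indJ.
Qed.

Lemma independent_le_alpha (I : {set T}) : independent E I -> #|I| <= alpha E.
Proof. by move=> indI; apply: (@leq_bigmax_cond _ (independent E) (fun A => #|A|)). Qed.

Lemma alpha_witness : exists2 I, independent E I & #|I| = alpha E.
Proof.
have indT : 0 < #|independent E| by apply/card_gt0P; exists set0; exact: independent0.
have [I indI maxI] := eq_bigmax_cond (fun A : {set T} => #|A|) indT.
by exists I; rewrite // maxI.
Qed.

Lemma alpha_gt0 : 0 < #|T| -> 0 < alpha E.
Proof.
by case/card_gt0P => x _; rewrite -(cards1 x) independent_le_alpha ?independent1.
Qed.

End Independence.

Section Output.
Variables (T : finType) (E : rel T).

Lemma acyclicS (S' S : {set T}) : S' \subset S -> acyclic E S -> acyclic E S'.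
Proof.
move=> /subsetP sS'S /forallP acS; apply/forallP => x; apply/forallP => y.
have sub_edgeS a b : sub_edge E S' a b -> sub_edge E S a b.
  by case/and4P=> aS' bS' nab Eab; rewrite /sub_edge nab Eab !sS'S.
apply/implyP=> /sub_edgeS exy; apply: contra (implyP (forallP (acS x) y) exy).
exact: connect_sub (fun a b ab => connect1 (sub_edgeS a b ab)) y x.
Qed.

Lemma noroots_independent (S : {set T}) : independent E (noroots E S).
Proof.
apply/independentP => x y; rewrite !inE => /andP[xS _] /andP[_ /forall_inP noinE_y].
exact: implyP (noinE_y x xS).
Qed.

Lemma oods_run_sub (S D : {set T}) : oods_run E S D -> D \subset S.
Proof.
elim=> {S D} [//|S D _ _ _ sDS|S u D _ _ uS _ _ sDS].
  rewrite subUset (subset_trans sDS) ?subsetDl ?andbT //.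
  by apply/subsetP => x; rewrite inE => /andP[].
by rewrite subUset sub1set uS (subset_trans sDS) ?subsetDl.
Qed.

Lemma oods_run_independent (S D : {set T}) :
  oods_run E S D -> acyclic E S \/ undirected E -> independent E D.
Proof.
elim=> {S D} [_|S D _ acS runD indD _|S u D _ nacS uS _ runD indD].
- exact: independent0.
- have {}indD := indD (or_introl (acyclicS (subsetDl _ _) acS)).
  have cross x y : x \in noroots E S -> y \in D -> ~~ E x y && ~~ E y x.
    move=> xN /(subsetP (oods_run_sub runD)); rewrite !in_setD !in_setU negb_or.
    case/andP=> /andP[yN yout] yS; apply/andP; split.
      by apply: contra yout => Exy; apply/bigcupP; exists x => //; rewrite inE yS.
    have yx : y != x by apply: contraNneq yN => ->.
    by move: xN; rewrite inE => /andP[_ /forall_inP/(_ y yS)/implyP]; apply.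
  by rewrite independentU ?noroots_independent.
- case=> [acS|undE]; first by rewrite acS in nacS.
  rewrite independentU ?independent1 ?(indD (or_intror undE)) //.
  move=> _ y /set1P -> /(subsetP (oods_run_sub runD)).
  rewrite !inE negb_or => /andP[/andP[_ nEuy] yS].
  by move: nEuy; rewrite yS (undE y) andbb.
Qed.

End Output.

Lemma card_set_sum (T : finType) (A : {set T}) (P : pred T) :
  #|[set y in A | P y]| = \sum_(y in A) P y.
Proof.
rewrite -sum1_card big_mkcond [RHS]big_mkcond /=; apply: eq_bigr => y _.
by rewrite inE; case: (y \in A); case: (P y).
Qed.

Section Degeneracy.
Variables (T : finType) (E : rel T).

Definition adjacent (x y : T) : bool := (x != y) && (E x y || E y x).

Definition degree (W : {set T}) (x : T) : nat := #|[set y in W | adjacent x y]|.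

Lemma outNS (W V : {set T}) x : W \subset V -> outN E W x \subset outN E V x.
Proof. by move=> sWV; apply/subsetP => y /setIdP[yW Exy]; rewrite inE (subsetP sWV). Qed.

Lemma card_outD1 (W : {set T}) x :
  #|outN E W x :\ x| = \sum_(y in W) ((x != y) && E x y).
Proof.
rewrite -card_set_sum; apply: eq_card => y; rewrite !inE eq_sym.
by case: (y \in W); rewrite ?andbF.
Qed.

Lemma sum_degree_le (W : {set T}) :
  \sum_(x in W) degree W x <= 2 * \sum_(x in W) #|outN E W x :\ x|.
Proof.
have sum_in : \sum_(x in W) #|outN E W x :\ x| =
              \sum_(x in W) \sum_(y in W) ((y != x) && E y x).
  by rewrite exchange_big; apply: eq_bigr => y _; rewrite card_outD1.
rewrite mul2n -addnn {2}sum_in -big_split /=; apply: leq_sum => x _.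
rewrite /degree card_set_sum card_outD1 -big_split /=; apply: leq_sum => y _.
by rewrite /adjacent eq_sym; case: (y != x); case: (E x y); case: (E y x).
Qed.

Lemma exists_low_degree (W : {set T}) m :
  {in W, forall x, #|outN E W x :\ x| <= m} -> W != set0 ->
  exists2 x, x \in W & degree W x <= 2 * m.
Proof.
move=> outW /set0Pn[x0 x0W].
have [/exists_inP //|/exists_inPn high] := boolP [exists x in W, degree W x <= 2 * m].
have : #|W| * (2 * m).+1 <= 2 * (#|W| * m).
  rewrite -!sum_nat_const; apply: leq_trans (leq_trans (sum_degree_le W) _).
    by apply: leq_sum => x /high; rewrite ltnNge.
  by rewrite leq_mul2l; apply/orP; right; apply: leq_sum => x /outW.
have : 0 < #|W| by apply/card_gt0P; exists x0.
nia.
Qed.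

Lemma low_outdeg_independent (V : {set T}) m :
  {in V, forall x, #|outN E V x :\ x| <= m} ->
  exists I : {set T}, [/\ I \subset V, independent E I & #|V| <= (2 * m).+1 * #|I|].
Proof.
have [n] := ubnP #|V|; elim: n V => // n IH V ltVn outV.
have [->|V0] := eqVneq V set0.
  by exists set0; rewrite sub0set independent0 cards0.
have [v vV degv] := exists_low_degree outV V0.
pose N := v |: [set y in V | adjacent v y].
have vN : v \in N := setU11 _ _.
have cardN : #|N| <= (2 * m).+1.
  by rewrite cardsU1 inE /adjacent eqxx andbF add1n ltnS.
have [|y /setDP[yV _]|I [sIVN indI cardI]] := IH (V :\: N).
- have := cardsID N V; have : 0 < #|V :&: N| by apply/card_gt0P; exists v; rewrite inE vV.
  lia.
- exact: leq_trans (subset_leq_card (setSD _ (outNS _ (subsetDl _ _)))) (outV y yV).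
have vI : v \notin I by apply: contraL vN => /(subsetP sIVN)/setDP[].
exists (v |: I); split.
- by rewrite subUset sub1set vV (subset_trans sIVN (subsetDl _ _)).
- rewrite independentU ?independent1 // => _ y /set1P -> /(subsetP sIVN) /setDP[yV].
  rewrite !inE yV /adjacent negb_or /= => /andP[vy].
  by rewrite eq_sym vy /= negb_or.
- have := cardsID N V; have := subset_leq_card (subsetIr V N).
  rewrite (cardsU1 v I) vI; nia.
Qed.

End Degeneracy.

(* n and l count the looped and loopless vertices, M is the maximum out-degree
   and r the number of vertices removed by a greedy step. *)
Lemma greedy_step_arith (n l a M r : nat) : 0 < a -> l < M -> M <= r ->
  n <= (2 * (M - 1 - l)).+1 * a -> n + l + a <= 2 * a * r.
Proof.
move=> a_gt0 lM Mr nle.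
have : l <= l * a by rewrite leq_pmulr.
have : 2 * a * M <= 2 * a * r by rewrite leq_mul2l Mr orbT.
nia.
Qed.

Section GreedyStep.
Variables (T : finType) (E : rel T).
Hypothesis obsE : strongly_observable E.

Definition loopless (S : {set T}) : {set T} := [set v in S | ~~ E v v].

Lemma in_looped (S : {set T}) x : (x \in S :\: loopless S) = (x \in S) && E x x.
Proof. by rewrite !inE negb_and negbK andbC; case: (x \in S). Qed.

Lemma loopless_sub_outN (S : {set T}) x :
  x \in S -> loopless S :\ x \subset outN E S x.
Proof.
move=> xS; apply/subsetP => y; rewrite !inE => /andP[yx /andP[yS nEyy]].
rewrite yS /=; case: (obsE y) => [Eyy|inE_y]; first by rewrite Eyy in nEyy.
by rewrite inE_y // eq_sym.
Qed.

Lemma card_outN_loopless (S : {set T}) v :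
  v \in S -> E v v ->
  #|outN E (S :\: loopless S) v :\ v| + 1 + #|loopless S| <= outdeg E S v.
Proof.
move=> vS Evv; set V := S :\: loopless S.
have vL : v \notin loopless S by rewrite inE Evv andbF.
have disjVL : outN E V v :&: loopless S = set0.
  apply/eqP; rewrite setI_eq0 disjoints_subset.
  by apply/subsetP => y; rewrite !inE => /andP[/andP[]].
have subL : loopless S \subset outN E S v.
  apply/subsetP => y yL; rewrite (subsetP (loopless_sub_outN vS)) // in_setD1 yL andbT.
  by apply: contraNneq vL => <-.
have vout : v \in outN E V v by rewrite !inE vS Evv.
have := cardsUI (outN E V v) (loopless S); rewrite disjVL cards0 addn0.
have := subset_leq_card (_ : outN E V v :|: loopless S \subset outN E S v).
rewrite subUset subL outNS ?subsetDl // (cardsD1 v (outN E V v)) vout /outdeg.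
lia.
Qed.

Lemma card_looped_le (S : {set T}) u :
  {in S, forall v, outdeg E S v <= outdeg E S u} ->
  #|S :\: loopless S| <= (2 * (outdeg E S u - 1 - #|loopless S|)).+1 * alpha E.
Proof.
move=> umax.
have outV : {in S :\: loopless S, forall x,
    #|outN E (S :\: loopless S) x :\ x| <= outdeg E S u - 1 - #|loopless S|}.
  move=> x; rewrite in_looped => /andP[xS Exx]; have := card_outN_loopless xS Exx; have := umax x xS; lia.
have [I [_ /independent_le_alpha indI cardV]] := low_outdeg_independent outV.
by apply: leq_trans cardV _; rewrite leq_mul2l indI orbT.
Qed.

Lemma greedy_step_large (S : {set T}) u :
  u \in S -> {in S, forall v, outdeg E S v <= outdeg E S u} ->
  #|S| + alpha E <= 2 * alpha E * #|u |: outN E S u|.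
Proof.
move=> uS umax; set L := loopless S; set r := #|u |: outN E S u|.
have a_gt0 : 0 < alpha E by apply: alpha_gt0; apply/card_gt0P; exists u.
have cardS : #|S| = #|S :\: L| + #|L|.
  have LS : L \subset S by apply/subsetP => y; rewrite inE => /andP[].
  by rewrite -(cardsID L S) (setIidPr LS) addnC.
have LR : #|L| <= r.
  apply: subset_leq_card; apply/subsetP => y yL; rewrite in_setU1.
  by have [//|yu] := eqVneq y u; rewrite (subsetP (loopless_sub_outN uS)) // in_setD1 yu.
have MR : outdeg E S u <= r by apply/subset_leq_card/subsetUr.
have ar : alpha E + r <= 2 * alpha E * r.
  have r_gt0 : 0 < r by apply/card_gt0P; exists u; apply: setU11.
  by rewrite -mulnA mul2n -addnn leq_add ?leq_pmulr ?leq_pmull.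
have [V0|[v vV]] := set_0Vmem (S :\: L).
  by rewrite cardS V0 cards0 add0n addnC (leq_trans _ ar) // leq_add2l.
have /andP[vS Evv] : (v \in S) && E v v by rewrite -in_looped.
have lM : #|L| < outdeg E S u.
  by have := card_outN_loopless vS Evv; have := umax v vS; rewrite /L; lia.
by rewrite cardS; apply: greedy_step_arith a_gt0 lM MR (card_looped_le umax).
Qed.

Lemma exists_proper_outN (S : {set T}) u x y :
  u \in S -> {in S, forall v, outdeg E S v <= outdeg E S u} -> sub_edge E S x y ->
  exists2 w, w \in outN E S u & w != u.
Proof.
move=> uS umax /and4P[xS yS xy Exy].
have [Exx|nExx] := boolP (E x x).
  have : 2 <= outdeg E S u.
    apply: leq_trans (umax x xS).
    have sub : [set x; y] \subset outN E S x.
      by apply/subsetP => z /set2P[]->; rewrite inE ?xS ?yS.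
    by have := subset_leq_card sub; rewrite cards2 xy.
  rewrite /outdeg (cardsD1 u) => out2.
  have /card_gt0P[w /setD1P[wu wout]] : 0 < #|outN E S u :\ u|.
    by move: out2; case: (u \in outN E S u); lia.
  by exists w.
have [<-|xu] := eqVneq x u; first by exists y; [rewrite inE yS | rewrite eq_sym].
exists x => //; rewrite inE xS /=.
by case: (obsE x) => [Exx|inE_x]; [rewrite Exx in nExx | rewrite inE_x // eq_sym].
Qed.

End GreedyStep.

Import Order.TTheory GRing.Theory Num.Theory.

Section Potential.
Local Open Scope ring_scope.
Variables (R : realType) (a : nat).
Hypothesis a_gt0 : (0 < a)%N.

Lemma le_ln_div (x y : R) : 0 < x -> 0 < y -> 1 - y / x <= ln (x / y).
Proof.
move=> x0 y0; have yx0 : 0 < y / x by rewrite divr_gt0.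
have := @le_ln1Dx R (y / x - 1) ltac:(lra); rewrite addrCA subrr addr0.
by rewrite -[x / y]invf_div lnV ?posrE //; lra.
Qed.

Definition phi (n : nat) : R :=
  if (n <= 2 * a)%N then n%:R / 2
  else 2 * a%:R * ln ((n + a)%:R / (3 * a)%:R) + a%:R + 1.

Lemma ln_shift_ge0 n : (2 * a < n)%N -> 0 <= ln ((n + a)%:R / (3 * a)%:R : R).
Proof.
by move=> lt2an; rewrite ln_ge0 // ler_pdivlMr ?mul1r ?ltr0n ?muln_gt0 // ler_nat; lia.
Qed.

Lemma phi_ge0 n : 0 <= phi n.
Proof.
rewrite /phi; case: leqP => [_|/ln_shift_ge0 ln_nneg]; first by rewrite divr_ge0.
by rewrite !addr_ge0 ?mulr_ge0.
Qed.

Lemma phi_step n r :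
  (2 <= r)%N -> (r <= n)%N -> (n + a <= 2 * a * r)%N -> 1 + phi (n - r) <= phi n.
Proof.
move=> r_ge2 rn large_r; have r2 : (2 : R) <= r%:R by rewrite ler_nat.
have a0 : (0 : R) <= a%:R by [].
rewrite /phi; have [n2a|n2a] := leqP n (2 * a).
  by rewrite (leq_trans (leq_subr r n) n2a) natrB //; lra.
have [nr2a|nr2a] := leqP (n - r) (2 * a).
  have := ln_shift_ge0 n2a; move: nr2a; rewrite -(ler_nat R) natrB // natrM; nra.
set N : R := (n + a)%:R.
have eN : (n - r + a)%:R = N - r%:R by rewrite /N !natrD natrB //; ring.
have Nr0 : 0 < N - r%:R by rewrite -eN ltr0n; lia.
have a3 : 0 < (3 * a)%:R :> R by rewrite ltr0n muln_gt0.
have N0 : 0 < N by rewrite ltr0n addn_gt0 a_gt0 orbT.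
have := le_ln_div N0 Nr0; rewrite ln_div ?posrE // eN !ln_div ?posrE //.
have -> : 1 - (N - r%:R) / N = r%:R / N by field; rewrite -natrD lt0r_neq0.
have : 1 <= 2 * a%:R * (r%:R / N).
  by rewrite mulrA ler_pdivlMr // mul1r /N -[2]/(2%:R) -!natrM ler_nat.
nra.
Qed.

Lemma phi_bound K g :
  (g + a <= K)%N -> g%:R <= phi K -> g%:R - 1 < 2 * a%:R * ln (K%:R / a%:R : R).
Proof.
move=> gaK; have A0 : (0 : R) < a%:R by rewrite ltr0n.
have K0 : (0 : R) < K%:R by rewrite ltr0n; lia.
have gaKR : g%:R + a%:R <= K%:R :> R by rewrite -natrD ler_nat.
rewrite /phi; case: leqP => [K2a _|K2a g_le].
  have := le_ln_div K0 A0; set q := a%:R / K%:R.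
  have qK : q * K%:R = a%:R by rewrite divfK ?gt_eqF.
  have q1 : q <= 1 by rewrite ler_pdivrMr // mul1r ler_nat; lia.
  have : K%:R <= 2 * a%:R :> R by rewrite -[2]/(2%:R) -natrM ler_nat.
  nra.
move: g_le; set KA : R := (K + a)%:R => g_le.
have KA0 : 0 < KA by rewrite ltr0n; lia.
have a3 : 0 < (3 * a)%:R :> R by rewrite ltr0n; lia.
have splitKa : K%:R / a%:R = KA / (3 * a)%:R * (3 * K%:R / KA).
  by rewrite natrM /KA natrD; field; rewrite -natrD lt0r_neq0 // gt_eqF.
rewrite splitKa lnM ?posrE ?divr_gt0 ?mulr_gt0 //.
have := le_ln_div (mulr_gt0 (ltr0n _ 3) K0) KA0; set q := KA / (3 * K%:R).
have K2aR : 2 * a%:R < K%:R :> R by rewrite -[2]/(2%:R) -natrM ltr_nat.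
have KAE : KA = K%:R + a%:R by rewrite /KA natrD.
have q_lt : 2 * q < 1 by rewrite /q mulrA ltr_pdivrMr ?mulr_gt0 // mul1r KAE; lra.
nra.
Qed.

End Potential.

Section GreedyCount.
Variables (R : realType) (T : finType) (E : rel T).
Hypotheses (obsE : strongly_observable E) (alpha_pos : 0 < alpha E).

Lemma oods_run_greedy_count (S D : {set T}) : oods_run E S D ->
  exists g : nat, [/\ #|D| <= g + alpha E,
    forall I : {set T}, I \subset S -> independent E I -> g + #|I| <= #|S| &
    (g%:R <= phi R (alpha E) #|S|)%R].
Proof.
elim=> {S D} [|S D S0 acS runD _|S u D _ nacS uS umax _ [g [Dg Ig phig]]].
- exists 0; split; [by rewrite cards0 | by move=> I; rewrite subset0 => /eqP-> |].
  exact: phi_ge0 _ alpha_pos _.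
- exists 0; split; last exact: phi_ge0 _ alpha_pos _.
  + rewrite add0n independent_le_alpha // (oods_run_independent (oods_acyc S0 acS runD)) //.
    by left.
  + by move=> I /subset_leq_card.
have [x /forallPn[y]] := forallPn nacS; rewrite negb_imply => /andP[xy _].
have [w wout wu] := exists_proper_outN obsE uS umax xy.
set Rm := u |: outN E S u in Ig phig *.
have RmS : Rm \subset S.
  by rewrite subUset sub1set uS; apply/subsetP => z /setIdP[].
have r2 : 2 <= #|Rm|.
  have sub : [set w; u] \subset Rm.
    by apply/subsetP => z /set2P[]->; [apply: setU1r | apply: setU11].
  by have := subset_leq_card sub; rewrite cards2 wu.
have cardS : #|S| = #|S :\: Rm| + #|Rm|.
  by rewrite -(cardsID Rm S) (setIidPr RmS) addnC.
exists g.+1; split.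
- by rewrite cardsU1; case: (u \notin D); lia.
- move=> I IS indI; have := Ig _ (setSD Rm IS) (independentS (subsetDl _ _) indI).
  have : #|I :&: Rm| < #|Rm|.
    apply/proper_card/properP; split; first exact: subsetIr.
    have [uI|uI] := boolP (u \in I); last by exists u; rewrite ?setU11 // inE negb_and uI.
    have Euw : E u w by case/setIdP: wout.
    exists w; first exact: setU1r.
    rewrite inE negb_and; apply/orP; left; apply/negP => wI.
    by move/independentP: indI => /(_ u w uI wI); rewrite eq_sym wu Euw => /(_ isT).
  have := cardsID Rm I; lia.
- have := phi_step R alpha_pos r2 (subset_leq_card RmS) (greedy_step_large obsE uS umax).
  have -> : #|S| - #|Rm| = #|S :\: Rm| by lia.
  by rewrite -natr1; lra.
Qed.

End GreedyCount.

Local Open Scope ring_scope.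

Theorem lemma24 (R : realType) (T : finType) (E : rel T) (D : {set T}) :
  (0 < #|T|)%N ->
  strongly_observable E ->
  OODS_output E D ->
  ((#|D|%:Z <=
      Num.ceil ((alpha E)%:R * (1 + 2 * ln ((#|T|%:R : R) / (alpha E)%:R)))) /\
   ((acyclic E [set: T] \/ undirected E) -> (#|D| <= alpha E)%N)).
Proof.
move=> T_gt0 obsE runD; split; last first.
  by move=> acyclic_or_undirected; apply/independent_le_alpha/(oods_run_independent runD).
have a_gt0 := alpha_gt0 E T_gt0.
have [g [Dg Ig phig]] := oods_run_greedy_count R obsE a_gt0 runD.
have [I indI cardI] := alpha_witness E.
have gaK : (g + alpha E <= #|T|)%N by rewrite -cardI -cardsT Ig ?subsetT.
rewrite cardsT in phig; have := phi_bound a_gt0 gaK phig.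
rewrite -ltzD1 -ltrBlDr ceil_gt_int intrB.
have : #|D|%:R <= g%:R + (alpha E)%:R :> R by rewrite -natrD ler_nat.
lra.
Qed.
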